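(* Let $G$ be a digraph of directed tree-width at most $k$. Then there is a directed tree-decomposition $(T,\mathcal{X},\mathcal{W})$, $T=(V_T,E_T)$, of $G$ of width at most $k$ such that $|W_r|=1$ for every $r\in V_T$.
   Context: Digraphs are finite, without loops or multiple arcs. An out-tree is a digraph whose underlying graph is a tree, with a root such that all arcs are directed away from it; $u\le v$ means there is a directed path with $\ge0$ arcs from $u$ to $v$. For $Z\subseteq V$, a set $S\subseteq V$ is $Z$-normal if there is no directed walk in $G-Z$ with first and last vertices in $S$ that uses a vertex of $G-(Z\cup S)$. A directed tree-decomposition of $G=(V,E)$ is a triple $(T,\mathcal{X},\mathcal{W})$ with $T=(V_T,E_T)$ an out-tree, $\mathcal{X}=\{X_e:e\in E_T\}$ and $\mathcal{W}=\{W_r:r\in V_T\}$ subsets of $V$, such that $\mathcal{W}$ is a partition of $V$ into nonempty sets and for every $(u,v)\in E_T$ the set $\bigcup\{W_r: r\in V_T, v\le r\}$ is $X_{(u,v)}$-normal. Its width is $\max_{r\in V_T}|W_r\cup\bigcup_{e\sim r}X_e|-1$ ($e\sim r$: $r$ is an end vertex of $e$); the directed tree-width is the minimum width. *)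

From mathcomp Require Import all_boot.
Set Implicit Arguments. Unset Strict Implicit. Unset Printing Implicit Defensive.

(* A digraph: finite vertex type V with an arc relation E.  Loops are excluded
   by irreflexivity; multiple arcs are excluded by using a relation. *)
Definition digraph (V : finType) (E : rel V) : Prop := irreflexive E.

Definition uadj (T : finType) (E : rel T) : rel T := fun x y => E x y || E y x.

(* The underlying (multi)graph is a tree: connected and without cycles;
   a pair of antiparallel arcs counts as a cycle of length 2 in the
   underlying multigraph. *)
Definition underlying_tree (T : finType) (E : rel T) : Prop :=
  [/\ (forall x y : T, connect (uadj E) x y),
      (forall x y : T, E x y -> ~~ E y x) &
      (forall (x : T) (p : seq T),
          uniq (x :: p) -> 2 <= size p -> path (uadj E) x p ->
          ~~ uadj E (last x p) x)].

Definition tle (T : finType) (E : rel T) (u v : T) : bool := connect E u v.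

Definition out_tree (T : finType) (E : rel T) : Prop :=
  digraph E /\ underlying_tree E /\ exists r : T, forall v : T, tle E r v.

Definition normal (V : finType) (E : rel V) (Z S : {set V}) : Prop :=
  ~ exists (x : V) (p : seq V),
      [/\ path E x p,
          all (fun y => y \notin Z) (x :: p),
          x \in S, last x p \in S &
          has (fun y => y \notin Z :|: S) (x :: p)].

(* Directed tree-decomposition (T, X, W) of G = (V, E), with T = (VT, ET);
   X u v is the set X_e for the arc e = (u, v) of T (only meaningful on arcs). *)
Definition dtd (V : finType) (E : rel V) (VT : finType) (ET : rel VT)
    (X : VT -> VT -> {set V}) (W : VT -> {set V}) : Prop :=
  [/\ out_tree ET,
      (forall r : VT, W r != set0),
      (forall r s : VT, r != s -> [disjoint W r & W s]),
      (forall x : V, exists r : VT, x \in W r) &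
      (forall u v : VT, ET u v ->
         normal E (X u v) (\bigcup_(r | tle ET v r) W r))].

Definition bag (V : finType) (VT : finType) (ET : rel VT)
    (X : VT -> VT -> {set V}) (W : VT -> {set V}) (r : VT) : {set V} :=
  W r :|: (\bigcup_(u | ET u r) X u r) :|: (\bigcup_(w | ET r w) X r w).

Definition width (V : finType) (VT : finType) (ET : rel VT)
    (X : VT -> VT -> {set V}) (W : VT -> {set V}) : nat :=
  (\max_(r : VT) #|bag ET X W r|) - 1.

Definition dtw_le (V : finType) (E : rel V) (k : nat) : Prop :=
  exists (VT : finType) (ET : rel VT) (X : VT -> VT -> {set V})
         (W : VT -> {set V}), dtd E ET X W /\ width ET X W <= k.

From mathcomp Require Import all_boot.
Set Implicit Arguments. Unset Strict Implicit. Unset Printing Implicit Defensive.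

(* Pick a representative [rep r] in every part [W r].  The new decomposition
   lives on V itself: the representatives are linked like the nodes of the old
   tree, with the old separators, and every other vertex x of [W r] hangs off
   [rep r] as a leaf with separator {x}, which makes normality at that leaf
   trivial.  The bag of every vertex is contained in the bag of its old node,
   so the width does not grow.  The real work is checking that the new digraph
   is an out-tree, via the characterisation of out-trees as acyclic digraphs
   with in-degree at most one and a root. *)

Lemma prev_neq_next (T : eqType) (c : seq T) x :
  uniq c -> 2 < size c -> x \in c -> prev c x != next c x.
Proof.
move=> Uc + /rot_to [i q rot_c]; apply: contraTneq => prevE.
have := next_prev Uc x; rewrite prevE -!(next_rot i Uc) -(size_rot i) rot_c.
move: Uc; rewrite -(rot_uniq i) rot_c.
case: q {rot_c} => [|y [|z q]] //=; rewrite !inE !eqxx.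
case: (y =P x) => [-> | _]; first by rewrite eqxx.
by move=> + zx; rewrite zx eqxx orbT.
Qed.

Section OutTree.
Variables (T : finType) (e : rel T).

Definition arborescence : Prop :=
  [/\ forall a b, e a b -> ~~ connect e b a,
      forall a b v, e a v -> e b v -> a = b &
      exists r, forall v, connect e r v].

Lemma uadj_sym : symmetric (uadj e).
Proof. by move=> x y; rewrite /uadj orbC. Qed.

Lemma sub_uadj : subrel e (uadj e).
Proof. by move=> x y exy; rewrite /uadj exy. Qed.

Lemma connect_last x p y : path e x p -> y \in x :: p -> connect e y (last x p).
Proof.
move=> + y_in; case/splitPl: y_in => p1 p2 y_last.
rewrite cat_path last_cat -y_last => /andP [_ p2_path].
by apply/connectP; exists p2.
Qed.

Section FromOutTree.
Hypothesis tree_e : out_tree e.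

Lemma out_tree_acyclic a b : e a b -> ~~ connect e b a.
Proof.
have [irr [[_ asym no_cycle] _]] := tree_e.
move=> eab; apply/negP => /connectP [p0 b_p0 a_last].
case/shortenP: b_p0 a_last => p b_p Ubp _ a_last; rewrite {}a_last in eab.
case: p => [|y1 [|y2 p]] in b_p Ubp eab *.
- by rewrite /= irr in eab.
- by move: b_p => /andP [/asym]; rewrite eab.
- have := no_cycle b [:: y1, y2 & p] Ubp isT (sub_path sub_uadj b_p).
  by rewrite /= (sub_uadj eab).
Qed.

Lemma converging_disjoint_paths z pa pb a b v :
  a != b -> e a v -> e b v -> path e z pa -> path e z pb ->
  uniq (z :: pa) -> uniq (z :: pb) -> last z pa = a -> last z pb = b ->
  ~~ has (mem pb) pa -> False.
Proof.
move=> aNb eav ebv za zb Uza Uzb za_last zb_last papb.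
have [_ [[_ _ no_cycle] _]] := tree_e.
(* z pa v (rev pb) closes up to a cycle of the underlying graph. *)
have vNza : v \notin z :: pa.
  by apply: contraNN (out_tree_acyclic eav) => /(connect_last za); rewrite za_last.
have vNzb : v \notin z :: pb.
  by apply: contraNN (out_tree_acyclic ebv) => /(connect_last zb); rewrite zb_last.
have vbz : path (uadj e) v (rcons (rev pb) z).
  rewrite -rev_cons -(belast_rcons z pb v) -[X in path _ X](last_rcons z pb v).
  rewrite rev_path (eq_path (e' := uadj e)) => [|x y]; last exact: uadj_sym.
  by apply: (sub_path sub_uadj); rewrite rcons_path zb zb_last ebv.
move: vbz; rewrite rcons_path => /andP [vb bz].
apply: (negP (no_cycle z (pa ++ v :: rev pb) _ _ _)); last by rewrite last_cat.
- rewrite -cat_cons cat_uniq Uza /= has_rev has_sym /= negb_or mem_rev rev_uniq vNza.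
  move: Uzb vNzb papb; rewrite /= inE negb_or.
  by move=> /andP [/negbTE -> ->] /andP [_ ->] /negbTE ->.
- rewrite size_cat /= size_rev addnS ltnS.
  case: pa za_last {za Uza vNza papb} => [|y pa] //= za; rewrite add0n.
  by case: pb zb_last {zb Uzb vNzb vb bz} => [|y pb] //= zb; rewrite -za -zb eqxx in aNb.
- by rewrite cat_path (sub_path sub_uadj za) za_last /= (sub_uadj eav).
Qed.

Lemma converging_paths z pa pb a b v :
  a != b -> e a v -> e b v -> path e z pa -> path e z pb ->
  uniq (z :: pa) -> uniq (z :: pb) -> last z pa = a -> last z pb = b -> False.
Proof.
move=> aNb eav ebv; have [n] := ubnP (size pa).
elim: n z pa pb => // n IHn z pa pb pa_n za zb Uza Uzb za_last zb_last.
have [/hasP [w w_pa w_pb] | papb] := boolP (has (mem pb) pa); last first.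
  exact: (converging_disjoint_paths aNb eav ebv za zb).
case/splitPr: w_pa pa_n za Uza za_last => pa1 pa2 pa_n za Uza za_last.
case/splitPr: w_pb zb Uzb zb_last => pb1 pb2 zb Uzb zb_last.
apply: (IHn w pa2 pb2).
- by rewrite -ltnS (leq_trans _ pa_n) // ltnS size_cat /= addnS ltnS leq_addl.
- by move: za; rewrite cat_path => /and3P [].
- by move: zb; rewrite cat_path => /and3P [].
- by move: Uza; rewrite -cat_cons cat_uniq => /and3P [].
- by move: Uzb; rewrite -cat_cons cat_uniq => /and3P [].
- by rewrite -za_last last_cat.
- by rewrite -zb_last last_cat.
Qed.

Lemma out_tree_arborescence : arborescence.
Proof.
have [_ [_ [r r_root]]] := tree_e.
split=> [a b|a b v eav ebv|]; [exact: out_tree_acyclic | | by exists r].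
apply/eqP; apply: contraT => aNb.
have /connectP [pa0 ra0 a_last] := r_root a.
have /connectP [pb0 rb0 b_last] := r_root b.
case/shortenP: ra0 a_last => pa ra Ura _ a_last.
case/shortenP: rb0 b_last => pb rb Urb _ b_last.
by case: (converging_paths aNb eav ebv ra rb Ura Urb (esym a_last) (esym b_last)).
Qed.

End FromOutTree.

Section FromArborescence.
Hypothesis arb_e : arborescence.

Lemma ancestors_proper a b :
  e a b -> [set u | connect e u a] \proper [set u | connect e u b].
Proof.
have [acyclic _ _] := arb_e; move=> eab; apply/properP; split.
  by apply/subsetP => u; rewrite !inE => /connect_trans; apply; exact: connect1.
by exists b; rewrite !inE ?connect0 // (negbTE (acyclic _ _ eab)).
Qed.

Lemma arborescence_no_ucycle c : uniq c -> 2 < size c -> ~~ cycle (uadj e) c.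
Proof.
have [_ in_unique _] := arb_e.
move=> Uc c_size; apply/negP => c_cycle.
(* Both cycle neighbours of a vertex of maximal height are in-neighbours. *)
pose height v := #|[set u | connect e u v]|.
have [x0 x0_c] : exists x, x \in c.
  by case: c c_size {Uc c_cycle} => // x c _; exists x; exact: mem_head.
case: (arg_maxnP height x0_c) => v v_c v_max.
have arc_to_v y : y \in c -> uadj e y v -> e y v.
  move=> y_c /orP [//| evy]; have := proper_card (ancestors_proper evy).
  by move/leq_trans/(_ (v_max y y_c)); rewrite ltnn.
have epv := arc_to_v _ (etrans (mem_prev c v) v_c) (prev_cycle c_cycle v_c).
have env := arc_to_v _ (etrans (mem_next c v) v_c)
  (etrans (uadj_sym _ _) (next_cycle c_cycle v_c)).
by move: (prev_neq_next Uc c_size v_c); rewrite (in_unique _ _ _ epv env) eqxx.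
Qed.

Lemma arborescence_out_tree : out_tree e.
Proof.
have [acyclic _ [r r_root]] := arb_e.
have e_acyclic x y : e x y -> ~~ e y x.
  by move=> exy; apply: contra (acyclic _ _ exy); exact: connect1.
split; first by move=> x; apply/negP => exx; have := acyclic _ _ exx; rewrite connect0.
split; last by exists r.
split=> // [x y | x p Uxp p_size xp].
  have r_uadj z : connect (uadj e) r z.
    by apply: connect_sub (r_root z) => u w /sub_uadj; exact: connect1.
  by rewrite (connect_trans _ (r_uadj y)) // (sym_connect_sym uadj_sym).
apply: contra (arborescence_no_ucycle Uxp p_size) => closing.
by rewrite /= rcons_path xp.
Qed.

End FromArborescence.

Lemma out_treeP : out_tree e <-> arborescence.
Proof. by split; [exact: out_tree_arborescence | exact: arborescence_out_tree]. Qed.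

End OutTree.

Lemma normal_sub (V : finType) (E : rel V) (Z S : {set V}) :
  S \subset Z -> normal E Z S.
Proof.
by move=> SZ [x [p [_ /andP [xNZ _] xS _ _]]]; rewrite (subsetP SZ x xS) in xNZ.
Qed.

Section Bags.
Variables (V VT : finType) (ET : rel VT) (X : VT -> VT -> {set V}) (W : VT -> {set V}).

Lemma part_sub_bag r : W r \subset bag ET X W r.
Proof. by rewrite /bag -setUA subsetUl. Qed.

Lemma in_sep_sub_bag u r : ET u r -> X u r \subset bag ET X W r.
Proof.
move=> ur; rewrite /bag setUAC subsetU //.
by rewrite (bigcup_sup (P := ET^~ r) (F := X^~ r) _ ur) orbT.
Qed.

Lemma out_sep_sub_bag r w : ET r w -> X r w \subset bag ET X W r.
Proof.
by move=> rw; rewrite /bag subsetU // (bigcup_sup (P := ET r) (F := X r) _ rw) orbT.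
Qed.

End Bags.

Lemma width_le_of_bag_sub (V VT VT' : finType)
    (ET : rel VT) (X : VT -> VT -> {set V}) (W : VT -> {set V})
    (ET' : rel VT') (X' : VT' -> VT' -> {set V}) (W' : VT' -> {set V})
    (g : VT' -> VT) :
  (forall r, bag ET' X' W' r \subset bag ET X W (g r)) ->
  width ET' X' W' <= width ET X W.
Proof.
move=> bag_sub; rewrite leq_sub2r //; apply/bigmax_leqP => r _.
exact: leq_trans (subset_leq_card (bag_sub r)) (leq_bigmax (g r)).
Qed.

Lemma partition_memE (V VT : finType) (W : VT -> {set V}) (home : V -> VT) :
  (forall r s, r != s -> [disjoint W r & W s]) -> (forall x, x \in W (home x)) ->
  forall x r, (x \in W r) = (home x == r).
Proof.
move=> W_disj homeW x r; apply/idP/eqP => [xr | <-//].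
by apply: contraTeq xr => /W_disj /disjointFr ->.
Qed.

Section SplitTree.
Variables (V VT : finType) (ET : rel VT) (home : V -> VT) (rep : VT -> V).
Hypothesis repK : cancel rep home.

Definition hub (x : V) : bool := x == rep (home x).

Definition split_arc : rel V := fun x y =>
  hub x && ((home y == home x) && (y != x) || hub y && ET (home x) (home y)).

Lemma hub_rep r : hub (rep r).
Proof. by rewrite /hub repK. Qed.

Lemma split_arc_hub x y : split_arc x y -> hub x.
Proof. by case/andP. Qed.

Lemma split_arc_home x y : split_arc x y -> connect ET (home x) (home y).
Proof.
case/andP=> _ /orP [/andP [/eqP -> _] | /andP [_ /connect1 //]].
exact: connect0.
Qed.

Lemma connect_split_arc_home x y :
  connect split_arc x y -> connect ET (home x) (home y).
Proof.
move/connectP=> [p + ->]; elim: p x => [|z p IHp] x /=; first by rewrite connect0.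
by case/andP=> /split_arc_home xz /IHp; exact: connect_trans.
Qed.

Lemma split_arc_to_hub x y : hub y -> split_arc x y = hub x && ET (home x) (home y).
Proof.
rewrite /split_arc /hub => /eqP y_rep; case: (x =P rep (home x)) => //= x_rep.
have -> : (y != x) = (home y != home x).
  by rewrite y_rep x_rep !repK (inj_eq (can_inj repK)).
by rewrite andbN -y_rep eqxx.
Qed.

Lemma connect_leaf x y : ~~ hub x -> connect split_arc x y = (y == x).
Proof.
move=> xNhub; apply/idP/eqP => [/connectP [[|z p] /= + ->] // | ->].
  by rewrite /split_arc (negbTE xNhub).
exact: connect0.
Qed.

Lemma connect_rep r y : connect ET r (home y) -> connect split_arc (rep r) y.
Proof.
move/connectP=> [p + home_y]; elim: p r home_y => [|s p IHp] r /= home_y.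
  move=> _; have [y_rep | yNrep] := eqVneq y (rep r); first by rewrite y_rep connect0.
  by apply: connect1; rewrite /split_arc hub_rep repK home_y eqxx yNrep.
case/andP=> rs /(IHp _ home_y); apply: connect_trans; apply: connect1.
by rewrite split_arc_to_hub ?hub_rep // !repK rs.
Qed.

Lemma connect_hub x y : hub x -> connect split_arc x y = connect ET (home x) (home y).
Proof.
move=> /eqP x_rep; apply/idP/idP => [|/connect_rep]; first exact: connect_split_arc_home.
by rewrite -x_rep.
Qed.

Lemma split_arborescence : arborescence ET -> arborescence split_arc.
Proof.
case=> acyclic in_unique [r r_root]; split.
- move=> x y xy; have [y_hub | yNhub] := boolP (hub y).
    rewrite split_arc_to_hub // in xy; case/andP: xy => _ /acyclic.
    by apply: contra => /connect_split_arc_home.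
  rewrite connect_leaf //; apply: contraTneq xy => ->.
  by rewrite /split_arc (negbTE yNhub).
- move=> x y v xv yv.
  rewrite (eqP (split_arc_hub xv)) (eqP (split_arc_hub yv)); congr rep.
  have [v_hub | vNhub] := boolP (hub v).
    move: xv yv; rewrite !split_arc_to_hub // => /andP [_ xv] /andP [_ yv].
    exact: in_unique xv yv.
  move: xv yv; rewrite /split_arc (negbTE vNhub) /= !orbF.
  by move=> /and3P [_ /eqP <- _] /and3P [_ /eqP <- _].
- by exists (rep r) => y; apply: connect_rep.
Qed.

Variables (E : rel V) (X : VT -> VT -> {set V}) (W : VT -> {set V}).
Hypothesis memW : forall x r, (x \in W r) = (home x == r).

Definition split_sep (x y : V) : {set V} :=
  if hub y then X (home x) (home y) else [set y].

Lemma split_subtree v : hub v ->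
  \bigcup_(y | tle split_arc v y) [set y] = \bigcup_(s | tle ET (home v) s) W s.
Proof.
move=> v_hub; apply/setP => z; apply/bigcupP/bigcupP => [[y vy] | [s vs zs]].
  by rewrite inE => /eqP ->; exists (home y); rewrite /tle -?connect_hub ?memW.
by rewrite memW in zs; exists z; rewrite ?set11 // /tle connect_hub // (eqP zs).
Qed.

Lemma split_dtd : dtd E ET X W -> dtd E split_arc split_sep (fun x => [set x]).
Proof.
case=> /out_treeP tree _ _ _ normalX; split.
- exact/out_treeP/split_arborescence.
- by move=> x; apply/set0Pn; exists x; rewrite set11.
- by move=> x y xNy; rewrite disjoints1 inE.
- by move=> x; exists x; rewrite set11.
- move=> u v uv; rewrite /split_sep; have [v_hub | vNhub] := boolP (hub v).
    rewrite split_subtree //; apply: normalX.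
    by move: uv; rewrite split_arc_to_hub // => /andP [].
  apply: normal_sub; apply/bigcupsP => y.
  by rewrite /tle connect_leaf // => /eqP ->.
Qed.

Lemma split_bag_sub x :
  bag split_arc split_sep (fun x => [set x]) x \subset bag ET X W (home x).
Proof.
have part_sub y : home y = home x -> [set y] \subset bag ET X W (home x).
  by move=> home_y; rewrite sub1set (subsetP (part_sub_bag _ _ _ _)) // memW home_y.
rewrite /bag !subUset part_sub //=; apply/andP; split; apply/bigcupsP => y xy.
  rewrite /split_sep; have [x_hub | xNhub] := boolP (hub x); last exact: part_sub.
  by apply: in_sep_sub_bag; move: xy; rewrite split_arc_to_hub // => /andP [].
rewrite /split_sep; have [y_hub | yNhub] := boolP (hub y).
  by apply: out_sep_sub_bag; move: xy; rewrite split_arc_to_hub // => /andP [].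
apply: part_sub; move: xy; rewrite /split_arc (negbTE yNhub) /= orbF.
by move=> /and3P [_ /eqP].
Qed.

End SplitTree.

Theorem lemma4p8 (V : finType) (E : rel V) (k : nat) :
  digraph E -> dtw_le E k ->
  exists (VT : finType) (ET : rel VT) (X : VT -> VT -> {set V})
         (W : VT -> {set V}),
    [/\ dtd E ET X W, width ET X W <= k & forall r : VT, #|W r| = 1].
Proof.
move=> _ [VT [ET [X [W [dec width_k]]]]].
have [_ W_nonempty W_disj W_cover _] := dec.
have [home homeW] := fin_all_exists W_cover.
have [rep repW] := fin_all_exists (fun r => set0Pn _ (W_nonempty r)).
have memW := partition_memE W_disj homeW.
have repK : cancel rep home by move=> r; apply/eqP; rewrite -memW.
exists V, (split_arc ET home rep), (split_sep home rep X), (fun x => [set x]); split.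
- exact: (split_dtd repK memW dec).
- exact: leq_trans (width_le_of_bag_sub (split_bag_sub ET repK X memW)) width_k.
- by move=> x; rewrite cards1.
Qed.
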